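(* Let $f\in\mathscr{L}^r$ be a Lorenz expanding map. Then $f$ is eventually onto: for every open interval $J\subset[-1,1]\setminus\{0\}$ there is an integer $N>0$ such that $\bigcup_{i=0}^N f^i(J)=(-1,1)$ (where $f^i(J)$ denotes the image under $f^i$ of the set of points of $J$ at which $f^i$ is defined).
   Context: For $r\ge1$, $\mathscr{L}^r$ is the set of $C^r$ maps $f:[-1,1]\setminus\{0\}\to(-1,1)$ such that $\lim_{x\to0^-}f(x)=1$, $\lim_{x\to0^-}f'(x)=+\infty$, $\lim_{x\to0^+}f(x)=-1$, $\lim_{x\to0^+}f'(x)=+\infty$, and $-1<f(x)<1$, $f'(x)>\sqrt2$ for all $x\in[-1,1]\setminus\{0\}$. Such $f$ is called a Lorenz expanding map. The iterate $f^n$ is defined at $x$ if $f^m(x)\neq0$ for all $0\le m<n$. *)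

From Stdlib Require Import Reals.
From Coquelicot Require Import Coquelicot.
Open Scope R_scope.

Definition Dom (x : R) : Prop := -1 <= x <= 1 /\ x <> 0.

(* g has derivative l at x (a point of D), relative to the set D
   (one-sided at endpoints of D). *)
Definition has_deriv_within (D : R -> Prop) (g : R -> R) (x l : R) : Prop :=
  filterlim (fun y => (g y - g x) / (y - x))
    (within (fun y => D y /\ y <> x) (locally x)) (locally l).

Definition continuous_within (D : R -> Prop) (g : R -> R) (x : R) : Prop :=
  filterlim g (within D (locally x)) (locally (g x)).

Definition Cr_on (r : nat) (D : R -> Prop) (g : R -> R) : Prop :=
  exists d : nat -> R -> R,
    (forall x, D x -> d O x = g x) /\
    (forall k x, (k < r)%nat -> D x -> has_deriv_within D (d k) x (d (S k) x)) /\
    (forall k x, (k <= r)%nat -> D x -> continuous_within D (d k) x).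

Definition Lorenz_expanding (r : nat) (f : R -> R) : Prop :=
  Cr_on r Dom f /\
  exists fp : R -> R,
    (forall x, Dom x -> has_deriv_within Dom f x (fp x)) /\
    filterlim f (at_left 0) (locally 1) /\
    filterlim fp (at_left 0) (Rbar_locally p_infty) /\
    filterlim f (at_right 0) (locally (-1)) /\
    filterlim fp (at_right 0) (Rbar_locally p_infty) /\
    (forall x, Dom x -> -1 < f x < 1 /\ fp x > sqrt 2).

Definition iter_image (f : R -> R) (i : nat) (J : R -> Prop) (y : R) : Prop :=
  exists x, J x /\ (forall m, (m < i)%nat -> Nat.iter m f x <> 0) /\
            y = Nat.iter i f x.

(* Since f' > sqrt 2 is continuous on [-1,1] \ {0} and tends
   to +oo at 0, there is a uniform rate lam > sqrt 2 with f' >= lam.  The two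
   branches of f, completed at 0 by their one-sided limits -1 and 1, are then
   continuous on [0,1] and [-1,0]; by the mean value and intermediate value
   theorems each expands lengths by lam and maps every subinterval onto the
   interval between the images of its endpoints ([expanding_branches]).

   Follow an interval (u,v) contained in f^n(J).  If 0 is not
   inside it, its image has length >= lam (v-u).  If it is, the image of its
   longer half ends at 1 or -1 and has length >= lam (v-u)/2; either it reaches
   across 0, so it contains [0,1] or [-1,0], or it is a new interval.  Counting
   straddling intervals with weight 1/sqrt 2, the weighted length grows by the
   factor lam/sqrt 2 > 1 at each step, yet stays below 2, so after finitely many
   steps f^n(J) contains (0,1) or (-1,0); since f(1) > 0 > f(-1), two more
   iterates cover (-1,1). *)

From Stdlib Require Import Reals Lra Lia.
From Coquelicot Require Import Coquelicot.
Open Scope R_scope.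

Definition lim_within (D : R -> Prop) (g : R -> R) (c L : R) : Prop :=
  forall eps, 0 < eps -> exists del, 0 < del /\
    forall y, D y -> Rabs (y - c) < del -> Rabs (g y - L) < eps.

Lemma lim_within_of_filterlim (D : R -> Prop) g c L :
  filterlim g (within D (locally c)) (locally L) -> lim_within D g c L.
Proof.
  intros H eps Heps.
  rewrite filterlim_locally in H.
  destruct (H (mkposreal eps Heps)) as [del Hdel].
  exists del. split; [apply cond_pos|].
  intros y Dy Hy. exact (Hdel y Hy Dy).
Qed.

Lemma pinfty_within_of_filterlim (D : R -> Prop) g c :
  filterlim g (within D (locally c)) (Rbar_locally p_infty) ->
  forall M, exists del, 0 < del /\ forall y, D y -> Rabs (y - c) < del -> M < g y.
Proof.
  intros H M.
  assert (HM : Rbar_locally p_infty (fun x => M < x)) by (exists M; auto).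
  destruct (H _ HM) as [del Hdel].
  exists del. split; [apply cond_pos|].
  intros y Dy Hy. exact (Hdel y Hy Dy).
Qed.

Lemma lim_within_weaken (D D' : R -> Prop) g c L :
  (forall y, D' y -> D y) -> lim_within D g c L -> lim_within D' g c L.
Proof.
  intros Hsub H eps Heps. destruct (H eps Heps) as [del [Hdel Hlim]].
  exists del. split; auto.
Qed.

Lemma lim_within_ext (D : R -> Prop) g h c L :
  (forall y, D y -> g y = h y) -> lim_within D g c L -> lim_within D h c L.
Proof.
  intros Hgh H eps Heps. destruct (H eps Heps) as [del [Hdel Hlim]].
  exists del. split; auto.
  intros y Dy Hy. rewrite <- Hgh by exact Dy. auto.
Qed.

Lemma lim_within_unique (D : R -> Prop) g c l1 l2 :
  (forall del, 0 < del -> exists y, D y /\ Rabs (y - c) < del) ->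
  lim_within D g c l1 -> lim_within D g c l2 -> l1 = l2.
Proof.
  intros Hdense H1 H2. destruct (Req_dec l1 l2) as [|Hne]; auto. exfalso.
  assert (Heps : 0 < Rabs (l1 - l2) / 2)
    by (apply Rdiv_lt_0_compat; [apply Rabs_pos_lt; lra| lra]).
  destruct (H1 _ Heps) as [d1 [Hd1 H1']]. destruct (H2 _ Heps) as [d2 [Hd2 H2']].
  destruct (Hdense (Rmin d1 d2) (Rmin_pos _ _ Hd1 Hd2)) as [y [Dy Hy]].
  pose proof (Rmin_l d1 d2). pose proof (Rmin_r d1 d2).
  specialize (H1' y Dy ltac:(lra)). specialize (H2' y Dy ltac:(lra)).
  assert (Rabs (l1 - l2) <= Rabs (g y - l1) + Rabs (g y - l2)).
  { replace (l1 - l2) with (- (g y - l1) + (g y - l2)) by ring.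
    eapply Rle_trans; [apply Rabs_triang|]. rewrite Rabs_Ropp. lra. }
  lra.
Qed.

Lemma Dom_approached x : Dom x -> forall del, 0 < del ->
  exists y, (Dom y /\ y <> x) /\ Rabs (y - x) < del.
Proof.
  intros [Hx Hx0] del Hdel.
  set (t := Rmin (1/2) (del/2)).
  assert (Ht : 0 < t) by (apply Rmin_pos; lra).
  assert (Ht1 : t <= 1/2) by apply Rmin_l. assert (Ht2 : t <= del/2) by apply Rmin_r.
  exists (x * (1 - t)). split; [split; [split|]|].
  - nra.
  - intros Heq. apply Rmult_integral in Heq. lra.
  - intros Heq. assert (Hxt : x * t = 0) by lra. apply Rmult_integral in Hxt. lra.
  - replace (x * (1 - t) - x) with (- (x * t)) by ring. rewrite Rabs_Ropp, Rabs_mult.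
    rewrite (Rabs_pos_eq t) by lra.
    assert (Rabs x <= 1) by (apply Rabs_le; lra). pose proof (Rabs_pos x). nra.
Qed.

Definition slope (g : R -> R) (c y : R) : R := (g y - g c) / (y - c).

Lemma derivable_pt_lim_of_slope (D : R -> Prop) g G c l a b : a < c < b ->
  (forall y, a < y < b -> D y /\ G y = g y) ->
  lim_within (fun y => D y /\ y <> c) (slope g c) c l ->
  derivable_pt_lim G c l.
Proof.
  intros Hc HG H eps Heps. destruct (H eps Heps) as [del [Hdel Hlim]].
  assert (Hm : 0 < Rmin del (Rmin (c - a) (b - c))).
  { apply Rmin_pos; [lra| apply Rmin_pos; lra]. }
  exists (mkposreal _ Hm). intros h Hh Hhm. simpl in Hhm.
  pose proof (Rmin_l del (Rmin (c - a) (b - c))).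
  pose proof (Rmin_r del (Rmin (c - a) (b - c))).
  pose proof (Rmin_l (c - a) (b - c)). pose proof (Rmin_r (c - a) (b - c)).
  assert (Hh' := Hhm). apply Rabs_def2 in Hh'.
  destruct (HG (c + h) ltac:(lra)) as [Dch Ech]. destruct (HG c ltac:(lra)) as [_ Ec].
  rewrite Ech, Ec.
  specialize (Hlim (c + h)). unfold slope in Hlim.
  replace (c + h - c) with h in Hlim by ring.
  apply Hlim; [split; [auto| lra] | lra].
Qed.

(* Projection of R onto [a,b]; composing with it turns continuity relative
   to [a,b] into continuity on R, as required by the MVT and the IVT. *)
Definition clamp (a b x : R) : R := Rmax a (Rmin x b).

Lemma clamp_in a b x : a <= b -> a <= clamp a b x <= b.
Proof. intros. unfold clamp, Rmax, Rmin; repeat destruct Rle_dec; lra. Qed.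

Lemma clamp_id a b x : a <= x <= b -> clamp a b x = x.
Proof. intros. unfold clamp, Rmax, Rmin; repeat destruct Rle_dec; lra. Qed.

Lemma clamp_lipschitz a b x y : a <= b -> Rabs (clamp a b y - clamp a b x) <= Rabs (y - x).
Proof.
  intros. unfold clamp, Rmax, Rmin.
  repeat destruct Rle_dec; unfold Rabs; repeat destruct Rcase_abs; lra.
Qed.

Lemma clamp_continuous (h : R -> R) a b : a <= b ->
  (forall c, a <= c <= b -> lim_within (fun y => a <= y <= b) h c (h c)) ->
  forall t, continuity_pt (fun x => h (clamp a b x)) t.
Proof.
  intros Hab Hh t. apply continuity_pt_filterlim, filterlim_locally. intros eps.
  destruct (Hh (clamp a b t) (clamp_in a b t Hab) eps (cond_pos eps)) as [del [Hdel Hlim]].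
  exists (mkposreal del Hdel). intros y Hy. apply Hlim; [apply clamp_in; auto|].
  eapply Rle_lt_trans; [apply clamp_lipschitz; auto| exact Hy].
Qed.

(* A continuous function exceeding m on a compact interval attains its
   minimum there, so it is bounded below by some l > m. *)
Lemma continuous_lower_bound (g : R -> R) (m a b : R) : a <= b ->
  (forall c, a <= c <= b -> lim_within (fun y => a <= y <= b) g c (g c)) ->
  (forall c, a <= c <= b -> m < g c) ->
  exists l, m < l /\ forall c, a <= c <= b -> l <= g c.
Proof.
  intros Hab Hg Hm.
  destruct (continuity_ab_min (fun t => g (clamp a b t)) a b Hab) as [x [Hmin Hx]].
  { intros c _. apply clamp_continuous; auto. }
  rewrite clamp_id in Hmin by auto.
  exists (g x). split; [apply Hm; auto|].
  intros c Hc. specialize (Hmin c Hc). rewrite clamp_id in Hmin by auto. exact Hmin.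
Qed.

Lemma lower_bound_of_blowup (g : R -> R) (S : R -> Prop) (m M a b : R) :
  m < M -> a <= b ->
  (forall c, a <= c <= b -> lim_within (fun y => a <= y <= b) g c (g c)) ->
  (forall c, a <= c <= b -> m < g c) ->
  (forall c, S c -> a <= c <= b \/ M < g c) ->
  exists l, m < l /\ forall c, S c -> l <= g c.
Proof.
  intros HmM Hab Hg Hm HS.
  destruct (continuous_lower_bound g m a b Hab Hg Hm) as [l [Hl Hlg]].
  exists (Rmin l M). split; [apply Rmin_glb_lt; lra|].
  intros c Sc. destruct (HS c Sc) as [Hc|Hc].
  - eapply Rle_trans; [apply Rmin_l| apply Hlg; auto].
  - eapply Rle_trans; [apply Rmin_r| lra].
Qed.

Section Branch.
Variables (G dG : R -> R) (a b lam : R).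
Hypothesis a_lt_b : a < b.
Hypothesis G_cont : forall c, a <= c <= b -> lim_within (fun y => a <= y <= b) G c (G c).
Hypothesis G_deriv : forall c, a < c < b ->
  lim_within (fun y => a < y < b /\ y <> c) (slope G c) c (dG c).
Hypothesis dG_ge : forall c, a < c < b -> lam <= dG c.

Let Gc := fun t => G (clamp a b t).

Lemma branch_expanding x y : a <= x -> x < y -> y <= b -> lam * (y - x) <= G y - G x.
Proof.
  intros Hx Hxy Hy.
  destruct (MVT_gen Gc x y (fun t => Rmax lam (dG t))) as [c [Hc Heq]].
  - intros t Ht. rewrite Rmin_left in Ht by lra. rewrite Rmax_right in Ht by lra.
    apply is_derive_Reals. rewrite Rmax_right by (apply dG_ge; lra).
    apply (derivable_pt_lim_of_slope (fun y => a < y < b) G Gc t (dG t) a b); [lra| |].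
    + intros z Hz. split; [exact Hz|]. unfold Gc. rewrite clamp_id; lra.
    + apply G_deriv. lra.
  - intros t _. apply clamp_continuous; [lra| exact G_cont].
  - unfold Gc in Heq. rewrite !clamp_id in Heq by lra. rewrite Heq.
    apply Rmult_le_compat_r; [lra| apply Rmax_l].
Qed.

Lemma branch_onto x y z : a <= x -> x < y -> y <= b -> G x < z < G y ->
  exists w, x < w < y /\ G w = z.
Proof.
  intros Hx Hxy Hy Hz.
  destruct (IVT_gen Gc x y z (clamp_continuous G a b ltac:(lra) G_cont)) as [w [Hw Heq]].
  - unfold Gc. rewrite !clamp_id by lra. rewrite Rmin_left, Rmax_right by lra. lra.
  - rewrite Rmin_left in Hw by lra. rewrite Rmax_right in Hw by lra.
    unfold Gc in Heq. rewrite clamp_id in Heq by lra.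
    exists w. split; auto.
    destruct (Req_dec w x) as [->|]; [lra|].
    destruct (Req_dec w y) as [->|]; [lra|]. lra.
Qed.
End Branch.

Definition extend_at (e L : R) (g : R -> R) (x : R) : R :=
  if Req_dec_T x e then L else g x.

Lemma extend_at_eq e L g : extend_at e L g e = L.
Proof. unfold extend_at. destruct Req_dec_T; congruence. Qed.

Lemma extend_at_neq e L g x : x <> e -> extend_at e L g x = g x.
Proof. unfold extend_at. destruct Req_dec_T; congruence. Qed.

Lemma extend_at_continuous (I : R -> Prop) g e L c :
  (c <> e -> lim_within (fun y => I y /\ y <> e) g c (g c)) ->
  lim_within (fun y => I y /\ y <> e) g e L ->
  lim_within I (extend_at e L g) c (extend_at e L g c).
Proof.
  intros Hc He eps Heps. destruct (Req_dec c e) as [->|Hce].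
  - rewrite extend_at_eq. destruct (He eps Heps) as [del [Hdel Hlim]].
    exists del. split; auto. intros y Iy Hy.
    destruct (Req_dec y e) as [->|Hye].
    + rewrite extend_at_eq, Rminus_diag, Rabs_R0. exact Heps.
    + rewrite extend_at_neq by exact Hye. apply Hlim; auto.
  - rewrite extend_at_neq by exact Hce. destruct (Hc Hce eps Heps) as [del [Hdel Hlim]].
    assert (Hdist : 0 < Rabs (c - e)) by (apply Rabs_pos_lt; lra).
    exists (Rmin del (Rabs (c - e))). split; [apply Rmin_pos; lra|]. intros y Iy Hy.
    pose proof (Rmin_l del (Rabs (c - e))). pose proof (Rmin_r del (Rabs (c - e))).
    assert (Hye : y <> e).
    { intros ->. rewrite Rabs_minus_sym in Hy. lra. }
    rewrite extend_at_neq by exact Hye. apply Hlim; [split; auto| lra].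
Qed.

(* The two branches of a Lorenz map, completed at 0 by their one-sided limits:
   [right_branch f] on [0,1] and [left_branch f] on [-1,0]. *)
Definition right_branch (f : R -> R) : R -> R := extend_at 0 (-1) f.
Definition left_branch (f : R -> R) : R -> R := extend_at 0 1 f.

Record expanding_branches (f : R -> R) (lam : R) : Prop := {
  eb_range : forall x, Dom x -> -1 < f x < 1;
  eb_right_expanding : forall x y, 0 <= x -> x < y -> y <= 1 ->
    lam * (y - x) <= right_branch f y - right_branch f x;
  eb_right_onto : forall x y z, 0 <= x -> x < y -> y <= 1 ->
    right_branch f x < z < right_branch f y -> exists w, x < w < y /\ right_branch f w = z;
  eb_left_expanding : forall x y, -1 <= x -> x < y -> y <= 0 ->
    lam * (y - x) <= left_branch f y - left_branch f x;
  eb_left_onto : forall x y z, -1 <= x -> x < y -> y <= 0 ->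
    left_branch f x < z < left_branch f y -> exists w, x < w < y /\ left_branch f w = z
}.

Lemma Cr_derivative_continuous r f fp : (1 <= r)%nat -> Cr_on r Dom f ->
  (forall c, Dom c -> has_deriv_within Dom f c (fp c)) ->
  (forall c, Dom c -> continuous_within Dom f c) /\
  (forall c, Dom c -> continuous_within Dom fp c).
Proof.
  intros Hr [d [Hd0 [Hd1 Hd2]]] Hfp.
  assert (Hd1fp : forall c, Dom c -> d 1%nat c = fp c).
  { intros c Dc.
    apply (lim_within_unique (fun y => Dom y /\ y <> c) (slope f c) c).
    - intros del Hdel. destruct (Dom_approached c Dc del Hdel) as [y Hy]. exists y; auto.
    - apply (lim_within_ext _ (slope (d 0%nat) c)).
      + intros y [Dy _]. unfold slope. rewrite !Hd0; auto.
      + apply lim_within_of_filterlim, Hd1; [lia| exact Dc].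
    - apply lim_within_of_filterlim, Hfp, Dc. }
  split; intros c Dc.
  - unfold continuous_within. rewrite <- Hd0 by exact Dc.
    apply (filterlim_within_ext _ (d 0%nat)); [exact Hd0|]. apply Hd2; [lia| exact Dc].
  - unfold continuous_within. rewrite <- Hd1fp by exact Dc.
    apply (filterlim_within_ext _ (d 1%nat)); [exact Hd1fp|]. apply Hd2; [exact Hr| exact Dc].
Qed.

Lemma sqrt2_pos : 0 < sqrt 2.
Proof. apply sqrt_lt_R0. lra. Qed.

Lemma sqrt2_sq : sqrt 2 * sqrt 2 = 2.
Proof. apply sqrt_sqrt. lra. Qed.

Lemma sqrt2_bounds : 1 < sqrt 2 < 2.
Proof. pose proof sqrt2_pos. pose proof sqrt2_sq. split; nra. Qed.

Section LorenzBranches.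
Variables (f fp : R -> R).
Hypothesis f_cont : forall c, Dom c -> continuous_within Dom f c.
Hypothesis f_deriv : forall c, Dom c -> has_deriv_within Dom f c (fp c).
Hypothesis fp_cont : forall c, Dom c -> continuous_within Dom fp c.
Hypothesis f_left : filterlim f (at_left 0) (locally 1).
Hypothesis fp_left : filterlim fp (at_left 0) (Rbar_locally p_infty).
Hypothesis f_right : filterlim f (at_right 0) (locally (-1)).
Hypothesis fp_right : filterlim fp (at_right 0) (Rbar_locally p_infty).
Hypothesis f_range : forall x, Dom x -> -1 < f x < 1.
Hypothesis fp_gt : forall x, Dom x -> sqrt 2 < fp x.

Lemma fp_continuous_on a b : -1 <= a -> b <= 1 -> (b < 0 \/ 0 < a) ->
  forall c, a <= c <= b -> lim_within (fun y => a <= y <= b) fp c (fp c).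
Proof.
  intros Ha Hb Hab c Hc. apply (lim_within_weaken Dom).
  - intros y Hy. split; [lra| intros ->; lra].
  - apply lim_within_of_filterlim, fp_cont. split; [lra| intros ->; lra].
Qed.

Lemma expansion_right : exists l, sqrt 2 < l /\ forall c, 0 < c <= 1 -> l <= fp c.
Proof.
  destruct (pinfty_within_of_filterlim _ fp 0 fp_right 2) as [del [Hdel Hnear]].
  set (d := Rmin (del / 2) (1 / 2)).
  assert (Hd : 0 < d) by (apply Rmin_pos; lra).
  assert (Hd1 : d <= del / 2) by apply Rmin_l. assert (Hd2 : d <= 1 / 2) by apply Rmin_r.
  apply (lower_bound_of_blowup fp _ (sqrt 2) 2 d 1); [apply sqrt2_bounds| lra| | |].
  - apply fp_continuous_on; lra.
  - intros c Hc. apply fp_gt. split; [lra| intros ->; lra].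
  - intros c Hc. destruct (Rle_dec d c); [left; lra| right].
    apply Hnear; [lra| rewrite Rminus_0_r, Rabs_right; lra].
Qed.

Lemma expansion_left : exists l, sqrt 2 < l /\ forall c, -1 <= c < 0 -> l <= fp c.
Proof.
  destruct (pinfty_within_of_filterlim _ fp 0 fp_left 2) as [del [Hdel Hnear]].
  set (d := Rmin (del / 2) (1 / 2)).
  assert (Hd : 0 < d) by (apply Rmin_pos; lra).
  assert (Hd1 : d <= del / 2) by apply Rmin_l. assert (Hd2 : d <= 1 / 2) by apply Rmin_r.
  apply (lower_bound_of_blowup fp _ (sqrt 2) 2 (-1) (- d)); [apply sqrt2_bounds| lra| | |].
  - apply fp_continuous_on; lra.
  - intros c Hc. apply fp_gt. split; [lra| intros ->; lra].
  - intros c Hc. destruct (Rle_dec c (- d)); [left; lra| right].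
    apply Hnear; [lra| rewrite Rminus_0_r, Rabs_left; lra].
Qed.

Lemma uniform_expansion : exists lam, sqrt 2 < lam /\ forall c, Dom c -> lam <= fp c.
Proof.
  destruct expansion_right as [lR [HlR HR]]. destruct expansion_left as [lL [HlL HL]].
  exists (Rmin lR lL). split; [apply Rmin_glb_lt; lra|].
  intros c [Hc Hc0]. destruct (Rlt_dec 0 c).
  - eapply Rle_trans; [apply Rmin_l| apply HR; lra].
  - eapply Rle_trans; [apply Rmin_r| apply HL; lra].
Qed.

Lemma right_branch_continuous c : 0 <= c <= 1 ->
  lim_within (fun y => 0 <= y <= 1) (right_branch f) c (right_branch f c).
Proof.
  intros Hc. apply extend_at_continuous.
  - intros Hc0. apply (lim_within_weaken Dom); [intros y [Hy Hy0]; split; [lra| exact Hy0]|].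
    apply lim_within_of_filterlim, f_cont. split; [lra| exact Hc0].
  - apply (lim_within_weaken (fun y => 0 < y)); [intros y [Hy Hy0]; lra|].
    apply lim_within_of_filterlim, f_right.
Qed.

Lemma left_branch_continuous c : -1 <= c <= 0 ->
  lim_within (fun y => -1 <= y <= 0) (left_branch f) c (left_branch f c).
Proof.
  intros Hc. apply extend_at_continuous.
  - intros Hc0. apply (lim_within_weaken Dom); [intros y [Hy Hy0]; split; [lra| exact Hy0]|].
    apply lim_within_of_filterlim, f_cont. split; [lra| exact Hc0].
  - apply (lim_within_weaken (fun y => y < 0)); [intros y [Hy Hy0]; lra|].
    apply lim_within_of_filterlim, f_left.
Qed.

Lemma branch_slope L a b c : -1 <= a -> b <= 1 -> (b <= 0 \/ 0 <= a) -> a < c < b ->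
  lim_within (fun y => a < y < b /\ y <> c) (slope (extend_at 0 L f) c) c (fp c).
Proof.
  intros Ha Hb Hab Hc.
  apply (lim_within_ext _ (slope f c)).
  - intros y [Hy _]. unfold slope. rewrite !extend_at_neq; [reflexivity| |]; intros ->; lra.
  - apply (lim_within_weaken (fun y => Dom y /\ y <> c)).
    + intros y [Hy Hyc]. split; [split; [lra| intros ->; lra]| exact Hyc].
    + apply lim_within_of_filterlim, f_deriv. split; [lra| intros ->; lra].
Qed.

Lemma branches_expanding : exists lam, sqrt 2 < lam /\ expanding_branches f lam.
Proof.
  destruct uniform_expansion as [lam [Hlam Hfp]].
  assert (HfpR : forall c, 0 < c < 1 -> lam <= fp c) by (intros c Hc; apply Hfp; split; lra).
  assert (HfpL : forall c, -1 < c < 0 -> lam <= fp c) by (intros c Hc; apply Hfp; split; lra).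
  exists lam. split; [exact Hlam|]. constructor.
  - exact f_range.
  - intros x y Hx Hxy Hy. apply (branch_expanding _ fp 0 1); try lra;
      [exact right_branch_continuous| intros c Hc; apply branch_slope; lra| exact HfpR].
  - intros x y z Hx Hxy Hy Hz. apply (branch_onto _ 0 1); try lra;
      exact right_branch_continuous.
  - intros x y Hx Hxy Hy. apply (branch_expanding _ fp (-1) 0); try lra;
      [exact left_branch_continuous| intros c Hc; apply branch_slope; lra| exact HfpL].
  - intros x y z Hx Hxy Hy Hz. apply (branch_onto _ (-1) 0); try lra;
      exact left_branch_continuous.
Qed.
End LorenzBranches.

Lemma Lorenz_map_expanding r f : (1 <= r)%nat -> Lorenz_expanding r f ->
  exists lam, sqrt 2 < lam /\ expanding_branches f lam.
Proof.
  intros Hr [Hcr [fp [Hfp [HfL [HfpL [HfR [HfpR Hb]]]]]]].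
  destruct (Cr_derivative_continuous r f fp Hr Hcr Hfp) as [Hfc Hfpc].
  apply (branches_expanding f fp); auto.
  - intros x Dx. apply Hb, Dx.
  - intros x Dx. apply Hb, Dx.
Qed.

Lemma iter_image_step f n (J : R -> Prop) y :
  iter_image f n J y -> y <> 0 -> iter_image f (S n) J (f y).
Proof.
  intros [x [Jx [Hdef Hy]]] Hy0. exists x. split; [exact Jx|]. split.
  - intros m Hm. destruct (Nat.eq_dec m n) as [->|Hne]; [rewrite <- Hy; exact Hy0|].
    apply Hdef. lia.
  - simpl. rewrite Hy. reflexivity.
Qed.

Lemma iter_in_range f : (forall x, Dom x -> -1 < f x < 1) ->
  forall i x, -1 < x < 1 -> (forall m, (m < i)%nat -> Nat.iter m f x <> 0) ->
  -1 < Nat.iter i f x < 1.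
Proof.
  intros Hrange. induction i as [|i IH]; intros x Hx Hdef; simpl; [exact Hx|].
  apply Hrange. assert (Hi := IH x Hx (fun m Hm => Hdef m ltac:(lia))).
  split; [lra| apply Hdef; lia].
Qed.

Lemma interval_in_Dom_bounds a b : a < b -> (forall x, a < x < b -> Dom x) ->
  -1 <= a /\ b <= 1.
Proof.
  intros Hab HD. split.
  - destruct (Rle_dec (-1) a) as [|Ha]; [assumption| exfalso].
    pose proof (Rmin_l b (-1)). pose proof (Rmin_r b (-1)).
    assert (a < Rmin b (-1)) by (apply Rmin_glb_lt; lra).
    destruct (HD ((a + Rmin b (-1)) / 2)) as [Hx _]; lra.
  - destruct (Rle_dec b 1) as [|Hb]; [assumption| exfalso].
    pose proof (Rmax_l a 1). pose proof (Rmax_r a 1).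
    assert (Rmax a 1 < b) by (apply Rmax_lub_lt; lra).
    destruct (HD ((b + Rmax a 1) / 2)) as [Hx _]; lra.
Qed.

Lemma pow_unbounded q B : 1 < q -> exists k, B < q ^ k.
Proof.
  intros Hq. destruct (Pow_x_infinity q ltac:(rewrite Rabs_right; lra) (B + 1)) as [k Hk].
  exists k. specialize (Hk k (le_n k)).
  rewrite Rabs_right in Hk by (left; apply pow_lt; lra). lra.
Qed.

Section Dynamics.
Variables (f : R -> R) (lam a b : R).
Hypothesis lam_gt : sqrt 2 < lam.
Hypothesis f_expanding : expanding_branches f lam.

Definition covered (n : nat) (u v : R) : Prop :=
  forall y, u < y < v -> iter_image f n (fun x => a < x < b) y.

Lemma covered_sub n u v u' v' : covered n u v -> u <= u' -> v' <= v -> covered n u' v'.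
Proof. intros H Hu Hv y Hy. apply H. lra. Qed.

Lemma covered_right_image n u v : 0 <= u -> u < v -> v <= 1 -> covered n u v ->
  covered (S n) (right_branch f u) (right_branch f v).
Proof.
  intros Hu Huv Hv H z Hz.
  destruct (eb_right_onto _ _ f_expanding u v z Hu Huv Hv Hz) as [w [Hw <-]].
  unfold right_branch. rewrite extend_at_neq by (intros ->; lra).
  apply iter_image_step; [apply H; lra| intros ->; lra].
Qed.

Lemma covered_left_image n u v : -1 <= u -> u < v -> v <= 0 -> covered n u v ->
  covered (S n) (left_branch f u) (left_branch f v).
Proof.
  intros Hu Huv Hv H z Hz.
  destruct (eb_left_onto _ _ f_expanding u v z Hu Huv Hv Hz) as [w [Hw <-]].
  unfold left_branch. rewrite extend_at_neq by (intros ->; lra).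
  apply iter_image_step; [apply H; lra| intros ->; lra].
Qed.

Lemma right_branch_bounds x : 0 <= x <= 1 -> -1 <= right_branch f x < 1.
Proof.
  intros Hx. unfold right_branch. destruct (Req_dec x 0) as [->|Hx0].
  - rewrite extend_at_eq. lra.
  - rewrite extend_at_neq by exact Hx0.
    pose proof (eb_range _ _ f_expanding x ltac:(split; [lra| exact Hx0])). lra.
Qed.

Lemma left_branch_bounds x : -1 <= x <= 0 -> -1 < left_branch f x <= 1.
Proof.
  intros Hx. unfold left_branch. destruct (Req_dec x 0) as [->|Hx0].
  - rewrite extend_at_eq. lra.
  - rewrite extend_at_neq by exact Hx0.
    pose proof (eb_range _ _ f_expanding x ltac:(split; [lra| exact Hx0])). lra.
Qed.

Lemma lam_gt_1 : 1 < lam.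
Proof. pose proof sqrt2_bounds. lra. Qed.

(* f(1) > 0 and f(-1) < 0: the full branches overlap, so that once (u,v)
   contains [0,1] or [-1,0], two more iterates cover all of (-1,1). *)
Lemma f_one_pos : 0 < f 1.
Proof.
  pose proof (eb_right_expanding _ _ f_expanding 0 1 ltac:(lra) ltac:(lra) ltac:(lra)).
  unfold right_branch in *. rewrite extend_at_eq, extend_at_neq in * by lra.
  pose proof lam_gt_1. lra.
Qed.

Lemma f_minus_one_neg : f (-1) < 0.
Proof.
  pose proof (eb_left_expanding _ _ f_expanding (-1) 0 ltac:(lra) ltac:(lra) ltac:(lra)).
  unfold left_branch in *. rewrite extend_at_eq, extend_at_neq in * by lra.
  pose proof lam_gt_1. lra.
Qed.

Definition half_covered (u v : R) : Prop := (u <= 0 /\ 1 <= v) \/ (u <= -1 /\ 0 <= v).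

Lemma covered_all n u v : covered n u v -> half_covered u v ->
  forall y, -1 < y < 1 -> exists i, (i <= n + 2)%nat /\ iter_image f i (fun x => a < x < b) y.
Proof.
  intros H Hhalf y Hy.
  pose proof f_one_pos as Hf1. pose proof f_minus_one_neg as Hfm1.
  assert (Hr1 : right_branch f 1 = f 1) by (apply extend_at_neq; lra).
  assert (Hl1 : left_branch f (-1) = f (-1)) by (apply extend_at_neq; lra).
  assert (Hr0 : right_branch f 0 = -1) by apply extend_at_eq.
  assert (Hl0 : left_branch f 0 = 1) by apply extend_at_eq.
  destruct Hhalf as [[Hu Hv]|[Hu Hv]].
  - assert (H1 : covered (S n) (-1) (f 1)).
    { rewrite <- Hr0, <- Hr1. apply covered_right_image; try lra.
      eapply covered_sub; [exact H| |]; lra. }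
    assert (H2 : covered (S (S n)) (f (-1)) 1).
    { rewrite <- Hl0, <- Hl1. apply covered_left_image; try lra.
      eapply covered_sub; [exact H1| |]; lra. }
    destruct (Rlt_dec y (f 1)).
    + exists (S n). split; [lia| apply H1; lra].
    + exists (S (S n)). split; [lia| apply H2; lra].
  - assert (H1 : covered (S n) (f (-1)) 1).
    { rewrite <- Hl0, <- Hl1. apply covered_left_image; try lra.
      eapply covered_sub; [exact H| |]; lra. }
    assert (H2 : covered (S (S n)) (-1) (f 1)).
    { rewrite <- Hr0, <- Hr1. apply covered_right_image; try lra.
      eapply covered_sub; [exact H1| |]; lra. }
    destruct (Rlt_dec y (f 1)).
    + exists (S (S n)). split; [lia| apply H2; lra].
    + exists (S n). split; [lia| apply H1; lra].
Qed.

(* Weighted length: intervals straddling 0 count 1/sqrt 2 of their length.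
   Under one step of the dynamics it grows by the factor lam / sqrt 2 > 1. *)
Definition weight (u v : R) : R :=
  if Rlt_dec u 0 then (if Rlt_dec 0 v then (v - u) / sqrt 2 else v - u) else v - u.

Lemma weight_plain u v : v <= 0 \/ 0 <= u -> weight u v = v - u.
Proof. intros H. unfold weight. destruct Rlt_dec; [destruct Rlt_dec|]; lra. Qed.

Lemma weight_straddle u v : u < 0 < v -> weight u v = (v - u) / sqrt 2.
Proof. intros H. unfold weight. destruct Rlt_dec; [destruct Rlt_dec|]; lra. Qed.

Lemma weight_bounds u v : u < v -> (v - u) / sqrt 2 <= weight u v <= v - u.
Proof.
  intros Huv. pose proof sqrt2_bounds.
  assert (Hd : (v - u) / sqrt 2 <= v - u).
  { apply Rle_div_l; [lra|]. nra. }
  unfold weight. destruct Rlt_dec; [destruct Rlt_dec|]; lra.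
Qed.

Lemma step_off_zero n u v : covered n u v -> -1 <= u -> u < v -> v <= 1 ->
  v <= 0 \/ 0 <= u ->
  exists u' v', covered (S n) u' v' /\ -1 <= u' /\ u' < v' /\ v' <= 1 /\
    lam / sqrt 2 * weight u v <= weight u' v'.
Proof.
  intros H Hu Huv Hv Hside.
  assert (Hgrow : exists u' v', covered (S n) u' v' /\ -1 <= u' /\ v' <= 1 /\
                    lam * (v - u) <= v' - u').
  { destruct Hside as [Hv0|Hu0].
    - exists (left_branch f u), (left_branch f v).
      pose proof (left_branch_bounds u ltac:(lra)). pose proof (left_branch_bounds v ltac:(lra)).
      split; [apply covered_left_image; auto| repeat split; try lra].
      apply (eb_left_expanding _ _ f_expanding); lra.
    - exists (right_branch f u), (right_branch f v).
      pose proof (right_branch_bounds u ltac:(lra)). pose proof (right_branch_bounds v ltac:(lra)).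
      split; [apply covered_right_image; auto| repeat split; try lra].
      apply (eb_right_expanding _ _ f_expanding); lra. }
  destruct Hgrow as [u' [v' [H' [Hu' [Hv' Hlen]]]]].
  pose proof lam_gt_1. pose proof sqrt2_bounds.
  assert (Huv' : u' < v') by nra.
  exists u', v'. repeat split; auto.
  rewrite weight_plain by exact Hside.
  eapply Rle_trans; [|apply weight_bounds; exact Huv'].
  unfold Rdiv. rewrite Rmult_assoc, (Rmult_comm (/ sqrt 2)), <- Rmult_assoc.
  apply Rmult_le_compat_r; [left; apply Rinv_0_lt_compat; lra| exact Hlen].
Qed.

(* Across 0, the longer half is mapped onto an interval ending at 1 or -1 of
   length at least lam/2 times that of (u,v); either it reaches across 0 (and
   then covers a half of (-1,1)) or its weight has grown by lam / sqrt 2. *)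
Lemma step_across_zero n u v : covered n u v -> -1 <= u -> u < 0 -> 0 < v -> v <= 1 ->
  (exists u' v', covered (S n) u' v' /\ half_covered u' v') \/
  (exists u' v', covered (S n) u' v' /\ -1 <= u' /\ u' < v' /\ v' <= 1 /\
    lam / sqrt 2 * weight u v <= weight u' v').
Proof.
  intros H Hu Hu0 Hv0 Hv.
  pose proof (covered_left_image n u 0 Hu Hu0 ltac:(lra)
    ltac:(eapply covered_sub; [exact H| |]; lra)) as HL.
  pose proof (covered_right_image n 0 v ltac:(lra) Hv0 Hv
    ltac:(eapply covered_sub; [exact H| |]; lra)) as HR.
  unfold left_branch, right_branch in HL, HR. rewrite extend_at_eq in HL, HR.
  fold (left_branch f) in HL. fold (right_branch f) in HR.
  destruct (Rle_dec (left_branch f u) 0) as [Hg|Hg].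
  { left. exists (left_branch f u), 1. split; [exact HL| left; lra]. }
  destruct (Rle_dec 0 (right_branch f v)) as [Hg'|Hg'].
  { left. exists (-1), (right_branch f v). split; [exact HR| right; lra]. }
  right.
  pose proof (eb_left_expanding _ _ f_expanding u 0 Hu Hu0 ltac:(lra)) as EL.
  pose proof (eb_right_expanding _ _ f_expanding 0 v ltac:(lra) Hv0 Hv) as ER.
  unfold left_branch, right_branch in EL, ER. rewrite extend_at_eq in EL, ER.
  fold (left_branch f) in EL. fold (right_branch f) in ER.
  pose proof (left_branch_bounds u ltac:(lra)). pose proof (right_branch_bounds v ltac:(lra)).
  assert (Hrate : lam / sqrt 2 * weight u v = lam * (v - u) / 2).
  { rewrite weight_straddle by lra. pose proof sqrt2_pos.
    replace 2 with (sqrt 2 * sqrt 2) at 3 by apply sqrt2_sq. field. lra. }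
  rewrite Hrate. pose proof lam_gt_1.
  destruct (Rle_dec v (- u)).
  - exists (left_branch f u), 1.
    split; [exact HL| split; [lra| split; [nra| split; [lra|]]]].
    rewrite weight_plain by lra. nra.
  - exists (-1), (right_branch f v).
    split; [exact HR| split; [lra| split; [nra| split; [lra|]]]].
    rewrite weight_plain by lra. nra.
Qed.

Lemma one_step n u v : covered n u v -> -1 <= u -> u < v -> v <= 1 ->
  (exists n' u' v', covered n' u' v' /\ half_covered u' v') \/
  (exists u' v', covered (S n) u' v' /\ -1 <= u' /\ u' < v' /\ v' <= 1 /\
    lam / sqrt 2 * weight u v <= weight u' v').
Proof.
  intros H Hu Huv Hv.
  destruct (Rlt_dec u 0) as [Hu0|Hu0]; [destruct (Rlt_dec 0 v) as [Hv0|Hv0]|].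
  - destruct (step_across_zero n u v H Hu Hu0 Hv0 Hv) as [[u' [v' Hd]]|Hs];
      [left; exists (S n), u', v'; exact Hd| right; exact Hs].
  - right. apply step_off_zero; auto; lra.
  - right. apply step_off_zero; auto; lra.
Qed.

(* The weight of an interval in [-1,1] is at most 2, so the growth by
   lam / sqrt 2 can happen only finitely often. *)
Lemma eventually_half_covered k : forall n u v, covered n u v -> -1 <= u -> u < v -> v <= 1 ->
  2 < (lam / sqrt 2) ^ k * weight u v ->
  exists n' u' v', covered n' u' v' /\ half_covered u' v'.
Proof.
  induction k as [|k IH]; intros n u v H Hu Huv Hv Hk.
  - simpl in Hk. pose proof (weight_bounds u v Huv). lra.
  - destruct (one_step n u v H Hu Huv Hv) as [Hd|[u' [v' [H' [Hu' [Huv' [Hv' Hw]]]]]]];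
      [exact Hd|].
    apply (IH (S n) u' v' H' Hu' Huv' Hv').
    assert (0 < (lam / sqrt 2) ^ k) by (apply pow_lt; pose proof sqrt2_pos;
      apply Rdiv_lt_0_compat; lra).
    simpl in Hk. nra.
Qed.

Lemma eventually_onto : a < b -> (forall x, a < x < b -> Dom x) ->
  exists N : nat, (0 < N)%nat /\
    forall y, (-1 < y < 1) <->
      (exists i, (i <= N)%nat /\ iter_image f i (fun x => a < x < b) y).
Proof.
  intros Hab HD. destruct (interval_in_Dom_bounds a b Hab HD) as [Ha Hb].
  assert (Hstart : covered 0 a b).
  { intros y Hy. exists y. split; [exact Hy| split; [intros; lia| reflexivity]]. }
  pose proof sqrt2_pos.
  assert (Hw : 0 < weight a b).
  { pose proof (weight_bounds a b Hab). assert (0 < (b - a) / sqrt 2) by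
      (apply Rdiv_lt_0_compat; lra). lra. }
  assert (Hrate : 1 < lam / sqrt 2) by (apply Rlt_div_r; lra).
  destruct (pow_unbounded (lam / sqrt 2) (2 / weight a b) Hrate) as [k Hk].
  assert (Hgrow : 2 < (lam / sqrt 2) ^ k * weight a b).
  { apply (Rmult_lt_compat_r (weight a b)) in Hk; [|exact Hw].
    unfold Rdiv in Hk. rewrite Rmult_assoc, Rinv_l, Rmult_1_r in Hk by lra. exact Hk. }
  destruct (eventually_half_covered k 0 a b Hstart Ha Hab Hb Hgrow) as [n [u [v [Hc Hh]]]].
  exists (n + 2)%nat. split; [lia|]. intros y. split.
  - intros Hy. exact (covered_all n u v Hc Hh y Hy).
  - intros [i [_ [x [Hx [Hdef ->]]]]].
    apply iter_in_range; [exact (eb_range _ _ f_expanding)| | exact Hdef].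
    pose proof (HD x Hx) as [Hx1 Hx0]. lra.
Qed.
End Dynamics.

Theorem mainTheorem8 (r : nat) (f : R -> R) :
  (1 <= r)%nat -> Lorenz_expanding r f ->
  forall a b : R, a < b -> (forall x, a < x < b -> Dom x) ->
  exists N : nat, (0 < N)%nat /\
    forall y : R,
      (-1 < y < 1) <->
      (exists i : nat, (i <= N)%nat /\ iter_image f i (fun x => a < x < b) y).
Proof.
  intros Hr Hf a b Hab HD.
  destruct (Lorenz_map_expanding r f Hr Hf) as [lam [Hlam Hexp]].
  exact (eventually_onto f lam a b Hlam Hexp Hab HD).
Qed.
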